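(* If $G$ is an $n$-vertex graph with minimum degree at least $n/2$, then $rc(G)\le 3$.
   Context: All graphs are finite, simple and undirected. An edge-colored graph is rainbow connected if every two vertices are connected by a path whose edges have pairwise distinct colors. The rainbow connection $rc(G)$ of a connected graph $G$ is the smallest number of colors in an edge coloring making $G$ rainbow connected. *)

From mathcomp Require Import all_boot.
Set Implicit Arguments. Unset Strict Implicit. Unset Printing Implicit Defensive.

Definition simple_graph (T : finType) (e : rel T) : Prop :=
  symmetric e /\ irreflexive e.

Definition deg (T : finType) (e : rel T) (x : T) : nat := #|[set y | e x y]|.

(* An edge colouring with colours in C: a symmetric function on pairs
   (only its values on edges matter). *)
Definition edge_coloring (T : finType) (C : Type) (c : T -> T -> C) : Prop :=
  forall x y, c x y = c y x.

Definition path_colors (T : finType) (C : Type) (c : T -> T -> C) (x : T) (p : seq T) : seq C :=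
  pairmap c x p.

Definition rainbow_path (T : finType) (C : eqType) (e : rel T) (c : T -> T -> C)
  (x y : T) (p : seq T) : bool :=
  [&& path e x p, last x p == y, uniq (x :: p) & uniq (path_colors c x p)].

Definition rainbow_connected (T : finType) (C : eqType) (e : rel T) (c : T -> T -> C) : Prop :=
  forall x y : T, exists p : seq T, rainbow_path e c x y p.

Definition rc_le (T : finType) (e : rel T) (k : nat) : Prop :=
  exists c : T -> T -> 'I_k, edge_coloring c /\ rainbow_connected e c.

From mathcomp Require Import all_boot zify.
Set Implicit Arguments. Unset Strict Implicit. Unset Printing Implicit Defensive.

(* By an augmenting-path argument, the condition deg >= n/2 yields a matching M
   leaving at most one vertex exposed.  Split the vertices into two sides so
   that every edge of M crosses, and colour the edges of M with 2, the other
   edges with 0 inside a side and 1 across.  Two nonadjacent vertices on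
   different sides have a common neighbour, which gives a rainbow path of
   length 2.  Two nonadjacent vertices x, y on the same side are joined by a
   rainbow path x a a' y (or x x' y, or x y' y) with aa' in M: if there were
   no such path, then N(x), x and the M-partners of the matched vertices of
   N[y] would be pairwise distinct, forcing deg x + deg y < n. *)

Section Matchings.

Variables (T : finType) (e : rel T).
Hypotheses (Se : symmetric e) (Ie : irreflexive e).

(* A matching is encoded as an involution whose fixed points are the exposed
   vertices and which maps every matched vertex to its partner. *)
Definition matching (m : T -> T) : Prop :=
  forall z, m (m z) = z /\ (m z != z -> e z (m z)).

Definition exposed (m : T -> T) : {set T} := [set z | m z == z].

Definition add_edge (m : T -> T) (p q : T) (z : T) : T :=
  if z == p then q else if z == q then p else m z.

Definition remove_edge (m : T -> T) (p : T) (z : T) : T :=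
  if (z == p) || (z == m p) then z else m z.

Section OneMatching.

Variable m : T -> T.
Hypothesis mm : matching m.

Lemma matchingK : involutive m. Proof. by move=> z; case: (mm z). Qed.

Lemma matching_edge z : m z != z -> e z (m z). Proof. by case: (mm z). Qed.

Lemma matching_inj : injective m. Proof. exact: inv_inj matchingK. Qed.

Lemma add_edge_matching p q :
  m p = p -> m q = q -> p != q -> e p q -> matching (add_edge m p q).
Proof.
move=> mp mq pq epq z; rewrite /add_edge.
case: (eqVneq z p) => [->|zp]; first by rewrite eq_sym (negbTE pq) !eqxx.
case: (eqVneq z q) => [->|zq]; first by rewrite eqxx Se.
have mzp : m z != p by apply: contra zp => /eqP mzp; rewrite -(matchingK z) mzp mp.
have mzq : m z != q by apply: contra zq => /eqP mzq; rewrite -(matchingK z) mzq mq.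
by rewrite (negbTE mzp) (negbTE mzq); apply: mm.
Qed.

Lemma exposed_add_edge p q :
  m p = p -> m q = q -> p != q -> exposed (add_edge m p q) = exposed m :\: [set p; q].
Proof.
move=> mp mq pq; apply/setP => z; rewrite !inE /add_edge.
case: (eqVneq z p) => [->|zp]; first by rewrite eq_sym (negbTE pq).
by case: (eqVneq z q) => [->|zq]; rewrite /= ?(negbTE pq).
Qed.

Lemma remove_edge_matching a : matching (remove_edge m a).
Proof.
move=> z; rewrite /remove_edge.
have [fixz|/norP[za zma]] := boolP ((z == a) || (z == m a)).
  by rewrite fixz eqxx.
have fixmz : (m z == a) || (m z == m a) = false.
  apply/norP; split; first by apply: contra zma => /eqP <-; rewrite matchingK.
  by rewrite (inj_eq matching_inj).
rewrite fixmz; exact: mm.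
Qed.

Lemma exposed_remove_edge a : exposed (remove_edge m a) = [set a; m a] :|: exposed m.
Proof. by apply/setP => z; rewrite !inE /remove_edge; case: ifP; rewrite ?eqxx. Qed.

End OneMatching.

Section Augmentation.

Variable m : T -> T.
Hypothesis mm : matching m.

Lemma augment_edge u w : m u = u -> m w = w -> u != w -> e u w ->
  exists2 g, matching g & #|exposed g| < #|exposed m|.
Proof.
move=> mu mw uw euw; exists (add_edge m u w); first exact: add_edge_matching.
rewrite exposed_add_edge //; apply: proper_card; apply/properP; split.
  exact: subsetDl.
by exists u; rewrite !inE ?eqxx ?mu.
Qed.

Lemma augment_path3 u a w : m u = u -> m w = w -> u != w ->
  e u a -> m a != a -> e (m a) w ->
  exists2 g, matching g & #|exposed g| < #|exposed m|.
Proof.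
move=> mu mw uw eua ma emaw.
have ua : u != a by apply: contraTneq eua => ->; rewrite Ie.
have uma : u != m a by apply/eqP => uma; move: ua; rewrite -(matchingK mm a) -uma mu eqxx.
have wa : w != a by apply: contraNneq ma => <-; rewrite mw.
have wma : w != m a by apply: contraTneq emaw => ->; rewrite Ie.
set m1 := remove_edge m a; set m2 := add_edge m1 u a.
have M1 : matching m1 := remove_edge_matching mm a.
have m1u : m1 u = u by rewrite /m1 /remove_edge (negbTE ua) (negbTE uma) mu.
have m1a : m1 a = a by rewrite /m1 /remove_edge eqxx.
have M2 : matching m2 := add_edge_matching M1 m1u m1a ua eua.
have m2ma : m2 (m a) = m a.
  rewrite /m2 /add_edge (eq_sym (m a) u) (negbTE uma) (negbTE ma).
  by rewrite /m1 /remove_edge eqxx orbT.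
have m2w : m2 w = w.
  rewrite /m2 /add_edge (eq_sym w u) (negbTE uw) (negbTE wa).
  by rewrite /m1 /remove_edge (negbTE wa) (negbTE wma) mw.
exists (add_edge m2 (m a) w).
  by apply: add_edge_matching; rewrite // eq_sym.
rewrite exposed_add_edge ?(eq_sym (m a)) // exposed_add_edge // exposed_remove_edge.
apply: proper_card; apply/properP; split; last by exists u; rewrite !inE mu eqxx //= andbF.
apply/subsetP => z; rewrite !inE => /andP[/norP[zma _] /andP[/norP[_ za]]].
by rewrite (negbTE za) (negbTE zma).
Qed.

(* N(x), x itself and the partners of the matched vertices of N[y] are pairwise
   distinct, and at least deg y vertices of N[y] are matched. *)
Lemma deg_sum_lt x y : ~~ e x y ->
  (forall a, (a == x) || e x a -> m a != a -> ~~ e (m a) y) ->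
  (m y != y -> ~~ e (m y) x) ->
  #|(y |: [set z | e y z]) :&: exposed m| <= 1 ->
  deg e x + deg e y < #|T|.
Proof.
move=> nxy noA noB; rewrite /deg.
set Nx := [set z | e x z]; set Ny := [set z | e y z] => few.
set S := (y |: Ny) :\: exposed m.
have degS : #|Ny| <= #|S|.
  have := cardsID (exposed m) (y |: Ny); rewrite cardsU1 inE Ie /= -/S => cardNy.
  by rewrite -(leq_add2l 1) -cardNy leq_add2r.
have partner_out b : b \in S -> e x (m b) = false.
  rewrite !inE => /andP[mb /orP[/eqP yb|eyb]].
    by rewrite yb Se; apply/negbTE/noB; rewrite -yb.
  apply/negP => exmb; have := noA (m b).
  by rewrite exmb orbT (matchingK mm) (eq_sym b) mb Se eyb => /(_ isT isT).
have disj : Nx :&: m @: S = set0.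
  apply/setP => z; rewrite !inE; apply/negbTE/andP => -[exz /imsetP[b bS zb]].
  by rewrite zb partner_out in exz.
have xout : x \notin Nx :|: m @: S.
  rewrite !inE Ie /=; apply/imsetP => -[b]; rewrite !inE => /andP[mb /orP[/eqP yb|eyb]] xb.
    by move: nxy; rewrite Se xb -yb (matching_edge mm mb).
  have := noA x; rewrite eqxx xb (matchingK mm) (eq_sym b) mb Se eyb.
  by move=> /(_ isT isT).
have cardU : #|Nx :|: m @: S| = #|Nx| + #|S|.
  by rewrite -(card_imset S (matching_inj mm)) -cardsUI disj cards0 addn0.
have := max_card (mem (x |: (Nx :|: m @: S))).
rewrite cardsU1 xout cardU; lia.
Qed.

End Augmentation.

Section Dirac.

Hypothesis dirac : forall x : T, #|T| <= 2 * deg e x.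

Lemma common_neighbour x y : ~~ e x y -> exists2 z, e x z & e z y.
Proof.
move=> nxy; set Nx := [set z | e x z]; set Ny := [set z | e y z].
have /set0Pn[z] : Nx :&: Ny != set0.
  apply/eqP => disj.
  have sub : Nx :|: Ny \subset [set~ x].
    apply/subsetP => z; rewrite !inE; apply: contraTneq => ->.
    by rewrite Ie Se (negbTE nxy).
  have := subset_leq_card sub; rewrite cardsC1.
  have := cardsUI Nx Ny; rewrite disj cards0 addn0 => ->.
  have : 0 < #|T| by apply/card_gt0P; exists x.
  have := dirac x; have := dirac y; rewrite /deg -/Nx -/Ny; lia.
by rewrite !inE => /andP[exz eyz]; exists z; rewrite // Se.
Qed.

Lemma augment_exposed_pair m u w : matching m -> u \in exposed m -> w \in exposed m -> u != w ->
  exists2 g, matching g & #|exposed g| < #|exposed m|.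
Proof.
move=> mm; rewrite !inE => /eqP mu /eqP mw uw.
case: (pickP (fun b => e w b && (m b == b))) => [b /andP[ewb /eqP mb]|no_exposed_nbr].
  by apply: (augment_edge mm mw mb _ ewb); apply: contraTneq ewb => ->; rewrite Ie.
case: (pickP (fun a => [&& e u a, m a != a & e (m a) w])) => [a /and3P[eua ma emaw]|no_path3].
  exact: (augment_path3 mm mu mw uw eua ma emaw).
have nuw : ~~ e u w by move: (no_exposed_nbr u); rewrite Se mu eqxx andbT => ->.
have noA a : (a == u) || e u a -> m a != a -> ~~ e (m a) w.
  case/orP => [/eqP->|eua] ma; first by rewrite mu eqxx in ma.
  by move: (no_path3 a); rewrite eua ma /= => ->.
have few : #|(w |: [set z | e w z]) :&: exposed m| <= 1.
  rewrite -(cards1 w); apply: subset_leq_card; apply/subsetP => z.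
  rewrite !inE => /andP[/orP[//|ewz] mz].
  by move: (no_exposed_nbr z); rewrite ewz mz.
have noB : m w != w -> ~~ e (m w) u by rewrite mw eqxx.
have := deg_sum_lt mm nuw noA noB few.
by have := dirac u; have := dirac w; lia.
Qed.

Lemma near_perfect_matching : exists2 m, matching m & #|exposed m| <= 1.
Proof.
suff grow n m : matching m -> #|exposed m| <= n ->
    exists2 g, matching g & #|exposed g| <= 1.
  apply: (grow #|T| id); last exact: max_card.
  by move=> z; split => //; rewrite eqxx.
elim: n m => [|n IH] m mm en; first by exists m => //; apply: leq_trans en _.
have [|/card_gt1P[u [w [eu ew uw]]]] := leqP #|exposed m| 1; first by exists m.
have [g mg lt] := augment_exposed_pair mm eu ew uw.
by apply: IH mg _; rewrite -ltnS (leq_trans lt).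
Qed.

End Dirac.

End Matchings.

Lemma last_rev_belast (A : Type) (x : A) p : last (last x p) (rev (belast x p)) = x.
Proof. by case: p => //= z p; rewrite rev_cons last_rcons. Qed.

Section RainbowPaths.

Variables (T : finType) (C : eqType) (e : rel T) (c : T -> T -> C).
Hypotheses (Se : symmetric e) (Ie : irreflexive e) (cs : edge_coloring c).

Lemma path_colors_rev x p :
  path_colors c (last x p) (rev (belast x p)) = rev (path_colors c x p).
Proof.
rewrite /path_colors; elim: p x => //= z p IH x.
by rewrite !rev_cons -!cats1 pairmap_cat IH last_rev_belast /= cs.
Qed.

Lemma rainbow_path_rev x y p :
  rainbow_path e c x y p -> rainbow_path e c y x (rev (belast x p)).
Proof.
case/and4P => pp /eqP <- up uc; apply/and4P; split.
- by rewrite rev_path (eq_path (fun a b => Se b a)).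
- by rewrite last_rev_belast.
- by rewrite -rev_rcons -lastI rev_uniq.
- by rewrite path_colors_rev rev_uniq.
Qed.

Lemma rainbow_path2 x z y :
  x != y -> e x z -> e z y -> c x z != c z y -> rainbow_path e c x y [:: z; y].
Proof.
move=> xy exz ezy cxzy.
have zx : z != x by apply: contraTneq exz => ->; rewrite Ie.
have zy : z != y by apply: contraTneq ezy => ->; rewrite Ie.
by rewrite /rainbow_path /path_colors /= exz ezy eqxx !inE negb_or xy eq_sym zx zy cxzy.
Qed.

End RainbowPaths.

Section SideColoring.

Variables (T : finType) (e : rel T).
Hypotheses (Se : symmetric e) (Ie : irreflexive e).
Hypothesis dirac : forall x : T, #|T| <= 2 * deg e x.
Variable m : T -> T.
Hypotheses (mm : matching e m) (near : #|exposed m| <= 1).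

Definition side (x : T) : bool := enum_rank x <= enum_rank (m x).

Definition side_coloring (x y : T) : 'I_3 :=
  if m x == y then ord_max else if side x == side y then ord0 else Ordinal (isT : 1 < 3).

Lemma side_partner x : m x != x -> side (m x) = ~~ side x.
Proof.
move=> mx; rewrite /side (matchingK mm) -ltnNge ltn_neqAle.
by rewrite (inj_eq val_inj) (inj_eq enum_rank_inj) mx.
Qed.

Lemma side_coloring_sym : edge_coloring side_coloring.
Proof.
move=> x y; rewrite /side_coloring (eq_sym (side x)).
by rewrite -(inj_eq (matching_inj mm)) (matchingK mm) eq_sym.
Qed.

Lemma rainbow_cross x y : ~~ e x y -> x != y -> side x != side y ->
  exists p, rainbow_path e side_coloring x y p.
Proof.
move=> nxy xy sxy; have [z exz ezy] := common_neighbour Se Ie dirac nxy.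
exists [:: z; y]; apply: rainbow_path2 => //; rewrite /side_coloring.
case: (eqVneq (m x) z) => [mxz|_]; case: (eqVneq (m z) y) => [mzy|_] //.
- by move: xy; rewrite -mzy -mxz (matchingK mm) eqxx.
- by case: ifP.
- by case: ifP.
- by move: sxy; case: (side x); case: (side y); case: (side z).
Qed.

Lemma rainbow_via_partner x y a : ~~ e x y -> x != y -> side x = side y ->
  (a == x) || e x a -> m a != a -> e (m a) y ->
  exists p, rainbow_path e side_coloring x y p.
Proof.
move=> nxy xy sxy /orP[/eqP-> | exa] ma emay.
  exists [:: m x; y]; apply: rainbow_path2 => //; first exact: (matching_edge mm ma).
  rewrite /side_coloring eqxx (matchingK mm) (negbTE xy); by case: ifP.
have xa : x != a by apply: contraTneq exa => ->; rewrite Ie.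
have xma : x != m a by apply: contraNneq nxy => ->.
have ay : a != y by apply: contraNneq nxy => <-.
have may : m a != y by apply: contraTneq emay => ->; rewrite Ie.
have mxa : m x != a by apply: contra xma => /eqP <-; rewrite (matchingK mm).
exists [:: a; m a; y].
rewrite /rainbow_path /path_colors /= exa (matching_edge mm ma) emay eqxx /= !inE.
rewrite !negb_or xa xma xy eq_sym ma ay may /=.
rewrite /side_coloring (negbTE mxa) eqxx (matchingK mm) (negbTE ay).
by rewrite (side_partner ma) sxy; case: (side a); case: (side y).
Qed.

Lemma rainbow_same_side x y : ~~ e x y -> x != y -> side x = side y ->
  exists p, rainbow_path e side_coloring x y p.
Proof.
move=> nxy xy sxy.
case: (pickP (fun a => [&& (a == x) || e x a, m a != a & e (m a) y])).
  by move=> a /and3P[xa ma emay]; apply: rainbow_via_partner xa ma emay.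
move=> noA.
case: (pickP (fun a => [&& (a == y) || e y a, m a != a & e (m a) x])).
  move=> a /and3P[ya ma emax].
  have nyx : ~~ e y x by rewrite Se.
  have yx : y != x by rewrite eq_sym.
  have [p rp] := rainbow_via_partner nyx yx (esym sxy) ya ma emax.
  by exists (rev (belast y p)); exact: (rainbow_path_rev Se side_coloring_sym rp).
move=> noB; exfalso.
have noA' a : (a == x) || e x a -> m a != a -> ~~ e (m a) y.
  by move=> xa ma; apply/negP => h; move: (noA a); rewrite /= xa ma h.
have noB' : m y != y -> ~~ e (m y) x.
  by move=> my; apply/negP => h; move: (noB y); rewrite /= eqxx my h.
have few : #|(y |: [set z | e y z]) :&: exposed m| <= 1.
  exact: leq_trans (subset_leq_card (subsetIr _ _)) near.
have := deg_sum_lt Se Ie mm nxy noA' noB' few.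
by have := dirac x; have := dirac y; lia.
Qed.

Lemma side_coloring_rainbow : rainbow_connected e side_coloring.
Proof.
move=> x y.
have [<-|xy] := eqVneq x y; first by exists [::]; rewrite /rainbow_path /= eqxx.
case exy: (e x y).
  by exists [:: y]; rewrite /rainbow_path /path_colors /= exy eqxx !inE xy.
have nxy : ~~ e x y by rewrite exy.
have [sxy|sxy] := eqVneq (side x) (side y).
  exact: rainbow_same_side.
exact: rainbow_cross.
Qed.

End SideColoring.

Theorem corollary1p5 (T : finType) (e : rel T) :
  simple_graph e ->
  (forall x : T, #|T| <= 2 * deg e x) ->
  rc_le e 3.
Proof.
move=> [Se Ie] dirac.
have [m mm near] := near_perfect_matching Se Ie dirac.
exists (side_coloring m); split; first exact: (side_coloring_sym mm).
exact: side_coloring_rainbow.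
Qed.
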